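(* Let $A\in SL_d(\mathbb Z)$ be such that no eigenvalue of $A$ is a root of unity and the characteristic polynomial of $A$ is irreducible over $\mathbb Q$. Then there exists a basis $\{v_1,\dots,v_d\}$ of $\mathbb C^d$ such that (1) each $v_i$ is an eigenvector of $A$, and (2) for every $k\in\mathbb Z^d\setminus\{0\}$, if $a_1(k),\dots,a_d(k)\in\mathbb C$ are the coefficients with $k=\sum_{i=1}^d a_i(k)v_i$, then $$\prod_{i=1}^d|a_i(k)|\ge1.$$ *)

From HB Require Import structures.
From mathcomp Require Import all_boot all_order all_algebra.
Set Implicit Arguments. Unset Strict Implicit. Unset Printing Implicit Defensive.
Import Order.TTheory GRing.Theory Num.Theory.
Local Open Scope ring_scope.

Definition intmx (R : nzRingType) (m n : nat) (A : 'M[int]_(m, n)) : 'M[R]_(m, n) :=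
  map_mx (fun z : int => z%:~R) A.

From HB Require Import structures.
From mathcomp Require Import all_boot all_order all_algebra.
From mathcomp Require Import separable polyorder.
Set Implicit Arguments. Unset Strict Implicit. Unset Printing Implicit Defensive.
Import Order.TTheory GRing.Theory Num.Theory.
Local Open Scope ring_scope.

(* The characteristic polynomial p of A is irreducible over Q, hence separable,
   so A has d distinct eigenvalues lam_i, all roots of p.  Fix an entry (r, s) of
   adj(X - A) in Z[X] that p does not divide; then the r-th rows of
   adj(lam_i - A) are nonzero left eigenvectors, they form an invertible matrix
   U, and the columns of V := U^-1 are eigenvectors.  The coordinates of k in
   the basis V are U k, whose i-th entry is g(lam_i) for one integer polynomial
   g.  Hence prod_i a_i(k) = det g(A) is an integer, and it is nonzero: g
   vanishes at one root of p iff p divides g iff it vanishes at all of them,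
   while U k <> 0. *)

Lemma irredp_dvdp_root (F L : fieldType) (f : {rmorphism F -> L}) (p q : {poly F}) x :
  irreducible_poly p -> root (map_poly f p) x -> (p %| q) = root (map_poly f q) x.
Proof.
move=> p_irr px; apply/idP/idP => [pq | qx].
  by apply: root_dvdp px; rewrite dvdp_map.
have [_ p_min] := p_irr.
have gcd_root : root (map_poly f (gcdp p q)) x by rewrite gcdp_map root_gcd px qx.
have gcd_nconst : size (gcdp p q) != 1%N.
  apply: contraL gcd_root => /size_poly1P[c c_neq0 ->].
  by rewrite map_polyC rootC fmorph_eq0.
by rewrite -(eqp_dvdl _ (p_min _ gcd_nconst (dvdp_gcdl p q))) dvdp_gcdr.
Qed.

Lemma irredp_separable (R : realFieldType) (p : {poly R}) :
  irreducible_poly p -> separable_poly p.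
Proof.
move=> p_irr; have [size_p _] := p_irr.
rewrite unlock irreducible_poly_coprime // gtNdvdp //.
  by rewrite -size_poly_eq0 size_deriv -subn1 subn_eq0 -ltnNge.
by rewrite size_deriv prednK // ltnW.
Qed.

Lemma separable_char_poly_roots (F : closedFieldType) n (M : 'M[F]_n) :
  separable_poly (char_poly M) ->
  {lam : 'I_n -> F | injective lam & forall i, root (char_poly M) (lam i)}.
Proof.
move=> sep_M; have [r def_p] := closed_field_poly_normal (char_poly M).
rewrite (monicP (char_poly_monic M)) scale1r in def_p.
have size_r : size r = n.
  by have := size_char_poly M; rewrite def_p size_prod_XsubC => -[].
have uniq_r : uniq r by rewrite -separable_prod_XsubC -def_p.
exists (fun i => r`_i) => [i j /eqP|i].
  by rewrite nth_uniq ?size_r // => /eqP/val_inj.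
by rewrite def_p root_prod_XsubC mem_nth ?size_r.
Qed.

Lemma adj_row_left_eigen (R : comNzRingType) n (M : 'M[R]_n) x i :
  \det (x%:M - M) = 0 ->
  row i (\adj (x%:M - M)) *m M = x *: row i (\adj (x%:M - M)).
Proof.
move=> det0; have : \adj (x%:M - M) *m (x%:M - M) = 0.
  by rewrite mul_adj_mx det0 raddf0.
rewrite mulmxBr mul_mx_scalar => /eqP; rewrite subr_eq0 => /eqP.
by rewrite -row_mul => <-; rewrite linearZ.
Qed.

Lemma horner_eval_char_poly_mx (R : comNzRingType) n (M : 'M[R]_n) x :
  map_mx (horner_eval x) (char_poly_mx M) = x%:M - M.
Proof.
apply/matrixP => i j; rewrite !mxE /= horner_evalE.
by rewrite hornerD hornerN hornerMn hornerX hornerC.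
Qed.

Lemma det_scalar_sub_char_poly (R : comNzRingType) n (M : 'M[R]_n) x :
  \det (x%:M - M) = (char_poly M).[x].
Proof. by rewrite -horner_evalE -det_map_mx horner_eval_char_poly_mx. Qed.

Lemma adj_scalar_sub_map_mx (R S : comNzRingType) (f : {rmorphism R -> S}) n
    (M : 'M[R]_n) x :
  \adj (x%:M - map_mx f M) =
  map_mx (fun q => (map_poly f q).[x]) (\adj (char_poly_mx M)).
Proof.
have -> : (fun q => (map_poly f q).[x]) = horner_eval x \o map_poly f by [].
by rewrite map_mx_comp !map_mx_adj map_char_poly_mx horner_eval_char_poly_mx.
Qed.

Lemma irredp_char_poly_adj_ndvdp (F : fieldType) n (M : 'M[F]_n) :
  irreducible_poly (char_poly M) ->
  exists i j, ~~ (char_poly M %| \adj (char_poly_mx M) i j).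
Proof.
set p := char_poly M => p_irr.
suff /existsP[i /existsP[j ndvd]] :
    [exists i, exists j, ~~ (p %| \adj (char_poly_mx M) i j)] by exists i, j.
apply: contraT; rewrite negb_exists => /forallP dvd_adj.
pose Q := map_mx (fun q => q %/ p) (\adj (char_poly_mx M)).
have adjE : \adj (char_poly_mx M) = p *: Q.
  apply/matrixP => i j; move: (dvd_adj i).
  rewrite negb_exists => /forallP/(_ j); rewrite negbK => dvd_ij.
  by rewrite [RHS]mxE [Q _ _]mxE mulrC divpK.
have := congr1 determinant (mul_mx_adj (char_poly_mx M)).
rewrite adjE det_mulmx detZ det_scalar -/p mulrA -exprS exprSr -mulrA.
rewrite -[RHS]mulr1 => /(mulfI (expf_neq0 _ (irredp_neq0 p_irr))).
move=> pQ1; have : p \is a GRing.unit by apply/unitrPr; exists (\det Q).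
have [size_p _] := p_irr.
by rewrite poly_unitE => /andP[/eqP size1]; rewrite size1 in size_p.
Qed.

Lemma eigenvector_rows_unitmx (F : fieldType) n (M U : 'M[F]_n) (lam : 'I_n -> F) :
  injective lam -> (forall i, row i U != 0) ->
  (forall i, row i U *m M = lam i *: row i U) -> U \in unitmx.
Proof.
move=> lam_inj Unz Ueig.
have row_eigen i : (<<row i U>> <= eigenspace M (lam i))%MS.
  by rewrite genmxE; apply/eigenspaceP.
have /mxdirect_sumsP dirE := mxdirect_sum_eigenspace M (P := predT) (in2W lam_inj).
have dirU : mxdirect (\sum_i <<row i U>>).
  apply/mxdirect_sumsP => i _; apply/eqP; rewrite -submx0 -[X in (_ <= X)%MS](dirE i isT).
  by rewrite capmxS // sumsmxS // => j _; exact: row_eigen.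
have : (\sum_i <<row i U>> <= U)%MS.
  by apply/sumsmx_subP => j _; rewrite genmxE row_sub.
move/mxrankS; rewrite (mxdirectP dirU) /=.
rewrite (eq_bigr (fun _ => 1%N)) => [|i _]; last by rewrite genmxE rank_rV Unz.
by rewrite sum1_card card_ord -row_full_unit /row_full eqn_leq rank_leq_col => ->.
Qed.

Lemma eigen_rows_diagonalize (F : fieldType) n (M U : 'M[F]_n) (lam : 'I_n -> F) :
  U \in unitmx -> (forall i, row i U *m M = lam i *: row i U) ->
  M *m invmx U = invmx U *m diag_mx (\row_i lam i).
Proof.
move=> U_unit Ueig; have UM : U *m M = diag_mx (\row_i lam i) *m U.
  by apply/row_matrixP => i; rewrite !row_mul Ueig row_diag_mx mxE -scalemxAl -rowE.
by rewrite -{1}[M](mulKmx U_unit) UM !mulmxA mulmxK.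
Qed.

Lemma col_invmx_eigen (F : fieldType) n (M U : 'M[F]_n) (lam : 'I_n -> F) i :
  U \in unitmx -> (forall i, row i U *m M = lam i *: row i U) ->
  M *m col i (invmx U) = lam i *: col i (invmx U).
Proof.
move=> U_unit /(eigen_rows_diagonalize U_unit) MV; apply/colP => j.
have := congr1 (fun N : 'M_n => N j i) MV; rewrite mul_mx_diag !mxE => MVji.
by rewrite mulrC -MVji; apply: eq_bigr => k _; rewrite mxE.
Qed.

Lemma det_horner_mx_diagonalizable (F : fieldType) n (M V : 'M[F]_n.+1)
    (d : 'rV_n.+1) (g : {poly F}) :
  V \in unitmx -> M *m V = V *m diag_mx d ->
  \det (horner_mx M g) = \prod_i g.[d 0 i].
Proof.
move=> V_unit MV; have -> : M = V *m diag_mx d *m invmx V by rewrite -MV mulmxK.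
rewrite horner_mx_uconj // horner_mx_diag !det_mulmx det_inv det_diag.
rewrite mulrAC divff ?mul1r -?unitfE -?unitmxE //.
by apply: eq_bigr => i _; rewrite mxE.
Qed.

Lemma map_poly_intr_ratr (L : numFieldType) (q : {poly int}) :
  map_poly (intr : int -> L) q = map_poly ratr (map_poly (intr : int -> rat) q).
Proof. by rewrite -map_poly_comp; apply: eq_map_poly => z /=; rewrite ratr_int. Qed.

Lemma intmx_ratr (L : numFieldType) m n (A : 'M[int]_(m, n)) :
  intmx L A = map_mx ratr (intmx rat A).
Proof. by rewrite /intmx -map_mx_comp; apply: eq_map_mx => z /=; rewrite ratr_int. Qed.

Lemma char_poly_intmx_adj_ndvdp n (A : 'M[int]_n) :
  irreducible_poly (char_poly (intmx rat A)) ->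
  exists i j, ~~ (char_poly (intmx rat A) %| map_poly intr (\adj (char_poly_mx A) i j)).
Proof.
have adjQ : \adj (char_poly_mx (intmx rat A)) =
    map_mx (map_poly intr) (\adj (char_poly_mx A)).
  by rewrite map_mx_adj map_char_poly_mx.
by move=> /irredp_char_poly_adj_ndvdp[i [j]]; rewrite adjQ mxE; exists i, j.
Qed.

Section IntegerMatrix.

Variables (C : numClosedFieldType) (n : nat) (A : 'M[int]_n.+1).
Hypothesis A_irr : irreducible_poly (char_poly (intmx rat A)).
Variable lam : 'I_n.+1 -> C.
Hypothesis lam_inj : injective lam.
Hypothesis lam_root : forall i, root (char_poly (intmx C A)) (lam i).
Variables r s : 'I_n.+1.
Hypothesis adj_rs :
  ~~ (char_poly (intmx rat A) %| map_poly intr (\adj (char_poly_mx A) r s)).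

Lemma root_char_poly_intmx_dvdp (q : {poly int}) i :
  root (map_poly intr q) (lam i) = (char_poly (intmx rat A) %| map_poly intr q).
Proof.
have := lam_root i; rewrite intmx_ratr -map_char_poly => root_i.
by rewrite map_poly_intr_ratr (irredp_dvdp_root _ A_irr root_i).
Qed.

Definition eigen_rows : 'M[C]_n.+1 :=
  \matrix_i row r (\adj ((lam i)%:M - intmx C A)).

Lemma eigen_rows_eigen i :
  row i eigen_rows *m intmx C A = lam i *: row i eigen_rows.
Proof.
rewrite rowK; apply: adj_row_left_eigen.
by rewrite det_scalar_sub_char_poly; apply/rootP.
Qed.

Lemma eigen_rowsE i j :
  eigen_rows i j = (map_poly intr (\adj (char_poly_mx A) r j)).[lam i].
Proof. by rewrite mxE mxE (adj_scalar_sub_map_mx (intr : int -> C)) mxE. Qed.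

Lemma eigen_rows_unitmx : eigen_rows \in unitmx.
Proof.
apply: (eigenvector_rows_unitmx lam_inj) eigen_rows_eigen => i.
apply/negP => /eqP/matrixP/(_ 0 s); rewrite [LHS]mxE [RHS]mxE eigen_rowsE => /eqP.
by rewrite -rootE root_char_poly_intmx_dvdp (negPf adj_rs).
Qed.

Definition eigen_coord_poly (k : 'cV[int]_n.+1) : {poly int} :=
  \sum_j \adj (char_poly_mx A) r j * (k j 0)%:P.

Lemma eigen_rows_coord (k : 'cV[int]_n.+1) i :
  (eigen_rows *m intmx C k) i 0 = (map_poly intr (eigen_coord_poly k)).[lam i].
Proof.
rewrite mxE rmorph_sum horner_sum; apply: eq_bigr => j _.
by rewrite eigen_rowsE rmorphM /= map_polyC hornerM hornerC [intmx _ _ _ _]mxE.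
Qed.

Lemma prod_eigen_rows_coord (k : 'cV[int]_n.+1) :
  \prod_i (eigen_rows *m intmx C k) i 0 = (\det (horner_mx A (eigen_coord_poly k)))%:~R.
Proof.
rewrite -(det_map_mx (intr : int -> C)) map_horner_mx.
have V_unit : invmx eigen_rows \in unitmx by rewrite unitmx_inv eigen_rows_unitmx.
rewrite (det_horner_mx_diagonalizable _ V_unit
  (eigen_rows_diagonalize eigen_rows_unitmx eigen_rows_eigen)).
by apply: eq_bigr => i _; rewrite eigen_rows_coord mxE.
Qed.

Lemma eigen_rows_coord_prod_ge1 (k : 'cV[int]_n.+1) :
  k != 0 -> 1 <= \prod_i `|(eigen_rows *m intmx C k) i 0|.
Proof.
move=> k_neq0; set a := eigen_rows *m intmx C k.
have kC_neq0 : intmx C k != 0.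
  apply: contra k_neq0 => /eqP/matrixP kC0; apply/eqP/matrixP => i j.
  by have /eqP := kC0 i j; rewrite !mxE intr_eq0 => /eqP.
have [i0 a_i0] : exists i0, a i0 0 != 0.
  apply/existsP; apply: contraR kC_neq0; rewrite negb_exists => /forallP a0.
  have a_eq0 : a = 0 by apply/colP => i; rewrite [RHS]mxE; apply/eqP/negPn/a0.
  by rewrite -(mulKmx eigen_rows_unitmx (intmx C k)) -/a a_eq0 mulmx0.
have ndvd : ~~ (char_poly (intmx rat A) %| map_poly intr (eigen_coord_poly k)).
  by rewrite -(root_char_poly_intmx_dvdp _ i0) rootE -eigen_rows_coord.
have : \prod_i a i 0 != 0.
  apply/prodf_neq0 => i _; rewrite eigen_rows_coord -rootE.
  by rewrite root_char_poly_intmx_dvdp.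
rewrite -normr_prod prod_eigen_rows_coord intr_eq0 -intr_norm ler1z.
by rewrite -gtz0_ge1 normr_gt0.
Qed.

End IntegerMatrix.

Theorem lemma4p4 (C : numClosedFieldType) (d : nat) (A : 'M[int]_d)
  (hdet : \det A = 1)
  (hirr : irreducible_poly (char_poly (intmx rat A)))
  (hnru : forall lam : C, eigenvalue (intmx C A) lam ->
            forall n : nat, (0 < n)%N -> ~~ n.-unity_root lam) :
  exists V : 'M[C]_d,
    V \in unitmx /\
    (forall i : 'I_d, exists lam : C, intmx C A *m col i V = lam *: col i V) /\
    (forall k : 'cV[int]_d, k != 0 ->
       forall a : 'cV[C]_d, intmx C k = V *m a ->
         1 <= \prod_(i < d) `|a i 0|).
Proof.
case: d A hdet hirr hnru => [|n] A _ A_irr _.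
  by case: A_irr; rewrite size_char_poly.
have A_sep : separable_poly (char_poly (intmx C A)).
  by rewrite intmx_ratr -map_char_poly separable_map irredp_separable.
have [lam lam_inj lam_root] := separable_char_poly_roots A_sep.
have [r [s adj_rs]] := char_poly_intmx_adj_ndvdp A_irr.
have U_unit := eigen_rows_unitmx A_irr lam_inj lam_root adj_rs.
exists (invmx (eigen_rows A lam r)); split; first by rewrite unitmx_inv.
split=> [i | k k_neq0 a kE].
  by exists (lam i); apply: col_invmx_eigen U_unit (eigen_rows_eigen lam_root r).
rewrite -[a](mulKVmx U_unit) -kE.
exact (eigen_rows_coord_prod_ge1 A_irr lam_inj lam_root adj_rs k_neq0).
Qed.
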